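(* Let $f\in\mathcal{C}(2\pi)$ and $m,n\ge0$. Then $$E^\alpha_{mn}(f;[-\pi,\pi])\le\frac{1+|\alpha|_\infty(\|Id-L\|-1)}{1-|\alpha|_\infty}\,E_{mn}(f;[-\pi,\pi])+\frac{|\alpha|_\infty}{1-|\alpha|_\infty}\|Id-L\|\,\|f\|_\infty,$$ where $\|Id-L\|$ is the operator norm.
   Context: Let $I=[x_0,x_N]=[-\pi,\pi]$, $N\ge2$, $\Delta=\{x_0<x_1<\dots<x_N\}$, $I_i=[x_{i-1},x_i]$, and $L_i(x)=a_ix+b_i$ the affine map of $I$ onto $I_i$ with $L_i(x_0)=x_{i-1}$, $L_i(x_N)=x_i$; $\alpha\in(-1,1)^N$, $|\alpha|_\infty=\max_i|\alpha_i|$. For $f,b$ continuous with $b(x_0)=f(x_0)$, $b(x_N)=f(x_N)$, $f^\alpha_{\Delta,b}$ is the unique continuous $g$ with $g(x)=f(x)+\alpha_i(g-b)(L_i^{-1}(x))$ for $x\in I_i$. $L:\mathcal{C}(2\pi)\to\mathcal{C}(2\pi)$ is bounded linear with $(Lf)(x_0)=f(x_0)$, $(Lf)(x_N)=f(x_N)$, and $\mathcal{F}^\alpha_{\Delta,L}(f)=f^\alpha_{\Delta,Lf}$. $\mathcal{C}(2\pi)=\{f\in\mathcal{C}([-\pi,\pi]):f(-\pi)=f(\pi)\}$ with sup norm; $\mathfrak{T}_m$ = real trigonometric polynomials of degree $\le m$; $\mathfrak{R}_{mn}(2\pi)=\{p/q:p\in\mathfrak{T}_m,q\in\mathfrak{T}_n,q>0\text{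 on }[-\pi,\pi]\}$; $\mathfrak{R}^\alpha_{mn}(2\pi)=\mathcal{F}^\alpha_{\Delta,L}(\mathfrak{R}_{mn}(2\pi))$. $E^\alpha_{mn}(f;[-\pi,\pi])=\inf\{\|f-r^\alpha\|_\infty:r^\alpha\in\mathfrak{R}^\alpha_{mn}(2\pi)\}$ and $E_{mn}(f;[-\pi,\pi])=\inf\{\|f-r\|_\infty:r\in\mathfrak{R}_{mn}(2\pi)\}$. *)

From Stdlib Require Import Reals Lra Lia ClassicalEpsilon.
Open Scope R_scope.

Definition Rsup (E : R -> Prop) : R :=
  epsilon (inhabits 0) (fun l => is_lub E l).
Definition Rinf (E : R -> Prop) : R := - Rsup (fun y => E (- y)).

Definition inI (x : R) : Prop := -PI <= x <= PI.

Definition supnorm (f : R -> R) : R :=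
  Rsup (fun y => exists x, inI x /\ y = Rabs (f x)).

Definition cont_on (a b : R) (g : R -> R) : Prop :=
  forall x, a <= x <= b -> forall eps, 0 < eps ->
    exists delta, 0 < delta /\
      forall y, a <= y <= b -> Rabs (y - x) < delta -> Rabs (g y - g x) < eps.

Definition C2pi (f : R -> R) : Prop := cont_on (-PI) PI f /\ f (-PI) = f PI.

Fixpoint trig_sum (a b : nat -> R) (m : nat) (x : R) : R :=
  match m with
  | O => a O
  | S k => trig_sum a b k x + a (S k) * cos (INR (S k) * x)
                             + b (S k) * sin (INR (S k) * x)
  end.

Definition trig_poly (m : nat) (p : R -> R) : Prop :=
  exists a b : nat -> R, forall x, p x = trig_sum a b m x.

Definition rat_trig (m n : nat) (r : R -> R) : Prop :=
  exists p q, trig_poly m p /\ trig_poly n q /\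
    (forall x, inI x -> 0 < q x) /\ r = (fun x => p x / q x).

Definition partition (xs : nat -> R) (N : nat) : Prop :=
  (2 <= N)%nat /\ xs O = - PI /\ xs N = PI /\
  (forall i, (i < N)%nat -> xs i < xs (S i)).

(* L_i(x) = a_i x + b_i with L_i(-pi) = x_{i-1}, L_i(pi) = x_i *)
Definition La (xs : nat -> R) (i : nat) : R := (xs i - xs (i - 1)%nat) / (2 * PI).
Definition Lb (xs : nat -> R) (i : nat) : R := xs (i - 1)%nat + PI * La xs i.
Definition Linv (xs : nat -> R) (i : nat) (t : R) : R := (t - Lb xs i) / La xs i.

Definition is_fractal (xs : nat -> R) (N : nat) (alpha : nat -> R)
  (f b g : R -> R) : Prop :=
  cont_on (-PI) PI g /\
  forall i, (1 <= i <= N)%nat -> forall t, xs (i - 1)%nat <= t <= xs i ->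
    g t = f t + alpha i * (g (Linv xs i t) - b (Linv xs i t)).

Fixpoint alpha_max (alpha : nat -> R) (N : nat) : R :=
  match N with
  | O => 0
  | S k => Rmax (alpha_max alpha k) (Rabs (alpha (S k)))
  end.

(* admissible operator L : C(2pi) -> C(2pi), bounded linear, interpolating
   the endpoints; functions are identified when equal on [-pi,pi] *)
Definition admissible_L (L : (R -> R) -> (R -> R)) : Prop :=
  (forall f, C2pi f -> C2pi (L f)) /\
  (forall f g, (forall x, inI x -> f x = g x) ->
     forall x, inI x -> L f x = L g x) /\
  (forall f g c, C2pi f -> C2pi g ->
     forall x, inI x -> L (fun t => f t + c * g t) x = L f x + c * L g x) /\
  (exists M, forall f, C2pi f -> supnorm (L f) <= M * supnorm f) /\
  (forall f, C2pi f -> L f (- PI) = f (- PI) /\ L f PI = f PI).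

Definition opnorm_IdL (L : (R -> R) -> (R -> R)) : R :=
  Rsup (fun y => exists h, C2pi h /\ supnorm h <= 1 /\
                   y = supnorm (fun t => h t - L h t)).

Definition E_mn (m n : nat) (f : R -> R) : R :=
  Rinf (fun y => exists r, rat_trig m n r /\ y = supnorm (fun t => f t - r t)).

(* E^alpha_{mn}(f): inf over r^alpha = F^alpha_{Delta,L}(r), r in R_mn *)
Definition E_alpha_mn (xs : nat -> R) (N : nat) (alpha : nat -> R)
  (L : (R -> R) -> (R -> R)) (m n : nat) (f : R -> R) : R :=
  Rinf (fun y => exists r g, rat_trig m n r /\ is_fractal xs N alpha r (L r) g /\
                   y = supnorm (fun t => f t - g t)).

From Stdlib Require Import Reals Lra Lia ClassicalEpsilon.
From Coquelicot Require Import Coquelicot.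
Open Scope R_scope.

(* Write a = |alpha|_inf < 1 and K = ||Id - L||.  For a fixed r in R_mn(2pi)
   with fractal counterpart r^alpha, the functional equation gives on each
   piece r^alpha - r = alpha_i ((r^alpha - r) + (r - L r)) o L_i^{-1}, hence
   (1 - a) ||r^alpha - r|| <= a ||r - L r|| <= a K ||r|| <= a K (||f|| + ||f - r||),
   and so ||f - r^alpha|| <= ||f - r|| + ||r^alpha - r|| <= c ||f - r|| + d with
   the constants c, d of the theorem.  Taking infima over r yields the claim. *)

Lemma Rsup_lub (E : R -> Prop) :
  (exists x, E x) -> (exists M, forall x, E x -> x <= M) -> is_lub E (Rsup E).
Proof.
  intros [x Ex] [M HM]. unfold Rsup. apply epsilon_spec.
  destruct (completeness E) as [l Hl].
  - exists M; exact HM.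
  - exists x; exact Ex.
  - exists l; exact Hl.
Qed.

Lemma Rsup_ge (E : R -> Prop) x M :
  (forall y, E y -> y <= M) -> E x -> x <= Rsup E.
Proof. intros HM Ex. destruct (Rsup_lub E) as [Hub _]; eauto. Qed.

Lemma Rsup_le (E : R -> Prop) M :
  (exists x, E x) -> (forall y, E y -> y <= M) -> Rsup E <= M.
Proof. intros Hne HM. destruct (Rsup_lub E) as [_ Hleast]; eauto. Qed.

Lemma Rinf_le (E : R -> Prop) x m :
  (forall y, E y -> m <= y) -> E x -> Rinf E <= x.
Proof.
  intros Hm Ex. unfold Rinf.
  assert (- x <= Rsup (fun y => E (- y))); [|lra].
  apply Rsup_ge with (M := - m).
  - intros y Ey. specialize (Hm _ Ey). lra.
  - now rewrite Ropp_involutive.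
Qed.

Lemma Rinf_ge (E : R -> Prop) m :
  (exists x, E x) -> (forall y, E y -> m <= y) -> m <= Rinf E.
Proof.
  intros [x Ex] Hm. unfold Rinf.
  assert (Rsup (fun y => E (- y)) <= - m); [|lra].
  apply Rsup_le.
  - exists (- x). now rewrite Ropp_involutive.
  - intros y Ey. specialize (Hm _ Ey). lra.
Qed.

(* This is how the pointwise estimate becomes
   the estimate between the two best-approximation errors. *)
Lemma Rinf_affine_le (A B : R -> Prop) m c d :
  0 < c -> (exists y, B y) -> (forall x, A x -> m <= x) ->
  (forall y, B y -> exists x, A x /\ x <= c * y + d) ->
  Rinf A <= c * Rinf B + d.
Proof.
  intros Hc HB Hm Hdom.
  assert (Hlow : (Rinf A - d) / c <= Rinf B).
  { apply Rinf_ge; [exact HB|]. intros y By.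
    destruct (Hdom y By) as [x [Ax Hx]].
    pose proof (Rinf_le A x m Hm Ax).
    apply Rmult_le_reg_l with c; [exact Hc|].
    replace (c * ((Rinf A - d) / c)) with (Rinf A - d) by (field; lra). lra. }
  apply Rmult_le_compat_l with (r := c) in Hlow; [|lra].
  replace (c * ((Rinf A - d) / c)) with (Rinf A - d) in Hlow by (field; lra).
  lra.
Qed.

Lemma continuity_pt_intro F x :
  (forall eps, 0 < eps -> exists d, 0 < d /\
     forall y, Rabs (y - x) < d -> Rabs (F y - F x) < eps) ->
  continuity_pt F x.
Proof.
  intros H eps Heps. destruct (H eps Heps) as [d [Hd Hy]].
  exists d; split; [exact Hd|]. intros y [_ Hyx]. now apply Hy.
Qed.

Lemma continuity_pt_elim F x : continuity_pt F x ->
  forall eps, 0 < eps -> exists d, 0 < d /\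
    forall y, Rabs (y - x) < d -> Rabs (F y - F x) < eps.
Proof.
  intros H eps Heps. destruct (H eps Heps) as [d [Hd Hy]].
  exists d; split; [exact Hd|]. intros y Hyx.
  destruct (Req_dec x y) as [<-|Hne].
  - unfold Rminus; rewrite Rplus_opp_r, Rabs_R0; exact Heps.
  - apply Hy. split; [split; [exact I|exact Hne]|exact Hyx].
Qed.

(* Projection of R onto [a,b]: composing with it turns continuity relative to
   [a,b] into continuity on all of R, where Stdlib's calculus applies. *)
Definition clamp (a b x : R) : R := Rmax a (Rmin x b).

Lemma clamp_in a b x : a <= b -> a <= clamp a b x <= b.
Proof. intros. unfold clamp, Rmax, Rmin. repeat destruct Rle_dec; lra. Qed.

Lemma clamp_id a b x : a <= x <= b -> clamp a b x = x.
Proof. intros. unfold clamp, Rmax, Rmin. repeat destruct Rle_dec; lra. Qed.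

Lemma clamp_lipschitz a b x y :
  a <= b -> Rabs (clamp a b y - clamp a b x) <= Rabs (y - x).
Proof.
  intros. unfold clamp, Rmax, Rmin. repeat destruct Rle_dec;
  repeat match goal with |- context [Rabs ?z] =>
    destruct (Rcase_abs z);
    [rewrite (Rabs_left z) by lra | rewrite (Rabs_right z) by lra] end; lra.
Qed.

Lemma cont_on_ext a b g h :
  cont_on a b g -> (forall x, a <= x <= b -> g x = h x) -> cont_on a b h.
Proof.
  intros Hc He x Hx eps Heps. destruct (Hc x Hx eps Heps) as [d [Hd Hy]].
  exists d; split; [exact Hd|]. intros y Hy1 Hy2. rewrite <- !He; auto.
Qed.

Lemma cont_on_of_pt a b g :
  (forall x, a <= x <= b -> continuity_pt g x) -> cont_on a b g.
Proof.
  intros H x Hx eps Heps.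
  destruct (continuity_pt_elim g x (H x Hx) eps Heps) as [d [Hd Hy]].
  exists d; auto.
Qed.

Lemma cont_on_clamp a b g :
  a <= b -> cont_on a b g -> forall x, continuity_pt (fun y => g (clamp a b y)) x.
Proof.
  intros Hab Hc x. apply continuity_pt_intro. intros eps Heps.
  destruct (Hc (clamp a b x) (clamp_in a b x Hab) eps Heps) as [d [Hd Hy]].
  exists d; split; [exact Hd|]. intros y Hyx. apply Hy.
  - now apply clamp_in.
  - eapply Rle_lt_trans; [apply clamp_lipschitz; exact Hab|exact Hyx].
Qed.

Lemma cont_on_of_clamp a b g :
  (forall x, continuity_pt (fun y => g (clamp a b y)) x) -> cont_on a b g.
Proof.
  intros H. apply cont_on_ext with (g := fun y => g (clamp a b y)).
  - apply cont_on_of_pt; auto.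
  - intros; now rewrite clamp_id.
Qed.

Lemma cont_on_const a b c : cont_on a b (fun _ => c).
Proof.
  intros x Hx eps Heps. exists 1; split; [lra|]. intros.
  unfold Rminus; rewrite Rplus_opp_r, Rabs_R0; exact Heps.
Qed.

Lemma cont_on_plus a b g h :
  a <= b -> cont_on a b g -> cont_on a b h -> cont_on a b (fun x => g x + h x).
Proof.
  intros Hab Hg Hh. apply cont_on_of_clamp. intros x.
  apply (continuity_pt_plus (fun y => g (clamp a b y)) (fun y => h (clamp a b y)));
    now apply cont_on_clamp.
Qed.

Lemma cont_on_minus a b g h :
  a <= b -> cont_on a b g -> cont_on a b h -> cont_on a b (fun x => g x - h x).
Proof.
  intros Hab Hg Hh. apply cont_on_of_clamp. intros x.
  apply (continuity_pt_minus (fun y => g (clamp a b y)) (fun y => h (clamp a b y)));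
    now apply cont_on_clamp.
Qed.

Lemma cont_on_scal a b g c :
  a <= b -> cont_on a b g -> cont_on a b (fun x => c * g x).
Proof.
  intros Hab Hg. apply cont_on_of_clamp. intros x.
  apply (continuity_pt_scal (fun y => g (clamp a b y))). now apply cont_on_clamp.
Qed.

Lemma cont_on_comp a b c d (phi g : R -> R) :
  c <= d -> (forall x, continuity_pt phi x) ->
  (forall x, a <= x <= b -> c <= phi x <= d) ->
  cont_on c d g -> cont_on a b (fun x => g (phi x)).
Proof.
  intros Hcd Hphi Hin Hg.
  apply cont_on_ext with (g := fun x => g (clamp c d (phi x))).
  - apply cont_on_of_pt. intros x _.
    apply (continuity_pt_comp phi (fun y => g (clamp c d y))); auto.
    now apply cont_on_clamp.
  - intros x Hx. now rewrite clamp_id by auto.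
Qed.

Lemma cont_on_bounded a b g :
  a <= b -> cont_on a b g -> exists B, forall x, a <= x <= b -> Rabs (g x) <= B.
Proof.
  intros Hab Hg.
  destruct (continuity_ab_maj (fun y => Rabs (g (clamp a b y))) a b Hab)
    as [xM [HM _]].
  { intros c _. apply (continuity_pt_comp (fun y => g (clamp a b y)) Rabs).
    - now apply cont_on_clamp.
    - apply Rcontinuity_abs. }
  exists (Rabs (g (clamp a b xM))). intros x Hx.
  specialize (HM x Hx). simpl in HM. now rewrite clamp_id in HM.
Qed.

Lemma cont_on_glue a c b g : cont_on a c g -> cont_on c b g -> cont_on a b g.
Proof.
  intros H1 H2 x Hx eps Heps.
  destruct (Rtotal_order x c) as [Hlt|[<-|Hgt]].
  - destruct (H1 x ltac:(lra) eps Heps) as [d [Hd Hy]].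
    exists (Rmin d (c - x)). split; [apply Rmin_pos; lra|].
    intros y Hy1 Hy2. pose proof (Rmin_l d (c - x)). pose proof (Rmin_r d (c - x)).
    apply Rabs_def2 in Hy2 as Hy3. apply Hy; [lra|].
    apply Rabs_def1; lra.
  - destruct (H1 x ltac:(lra) eps Heps) as [d1 [Hd1 Hy1]].
    destruct (H2 x ltac:(lra) eps Heps) as [d2 [Hd2 Hy2]].
    exists (Rmin d1 d2). split; [apply Rmin_pos; lra|].
    intros y Hya Hyb. pose proof (Rmin_l d1 d2). pose proof (Rmin_r d1 d2).
    destruct (Rle_dec y x); [apply Hy1|apply Hy2]; lra.
  - destruct (H2 x ltac:(lra) eps Heps) as [d [Hd Hy]].
    exists (Rmin d (x - c)). split; [apply Rmin_pos; lra|].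
    intros y Hy1 Hy2. pose proof (Rmin_l d (x - c)). pose proof (Rmin_r d (x - c)).
    apply Rabs_def2 in Hy2 as Hy3. apply Hy; [lra|].
    apply Rabs_def1; lra.
Qed.

Lemma cont_on_unif_limit a b u (P : nat -> R -> R) :
  (forall n, cont_on a b (P n)) ->
  (forall eps, 0 < eps -> exists n, forall t, a <= t <= b -> Rabs (u t - P n t) < eps) ->
  cont_on a b u.
Proof.
  intros HP Hu x Hx eps Heps.
  destruct (Hu (eps / 3) ltac:(lra)) as [n Hn].
  destruct (HP n x Hx (eps / 3) ltac:(lra)) as [d [Hd Hy]].
  exists d; split; [exact Hd|]. intros y Hy1 Hy2.
  specialize (Hy y Hy1 Hy2). pose proof (Hn x Hx). pose proof (Hn y Hy1).
  replace (u y - u x) with ((u y - P n y) + (P n y - P n x) - (u x - P n x)) by ring.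
  unfold Rminus at 1. eapply Rle_lt_trans; [apply Rabs_triang|].
  rewrite Rabs_Ropp. eapply Rle_lt_trans; [apply Rplus_le_compat_r, Rabs_triang|].
  lra.
Qed.

Lemma PI_ge_mPI : -PI <= PI.
Proof. pose proof PI_RGT_0; lra. Qed.

Lemma inI_0 : inI 0.
Proof. unfold inI; pose proof PI_RGT_0; lra. Qed.

(* h is bounded on [-pi,pi]; then supnorm h really is the supremum of |h|. *)
Definition bounded_on_I (h : R -> R) : Prop :=
  exists B, forall x, inI x -> Rabs (h x) <= B.

Lemma cont_bounded_on_I h : cont_on (-PI) PI h -> bounded_on_I h.
Proof. intros Hh. exact (cont_on_bounded _ _ h PI_ge_mPI Hh). Qed.

Lemma supnorm_ge h x : bounded_on_I h -> inI x -> Rabs (h x) <= supnorm h.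
Proof.
  intros [B HB] Hx. unfold supnorm. apply Rsup_ge with (M := B).
  - intros y [z [Hz ->]]. auto.
  - eauto.
Qed.

Lemma supnorm_le h M : (forall x, inI x -> Rabs (h x) <= M) -> supnorm h <= M.
Proof.
  intros HM. unfold supnorm. apply Rsup_le.
  - exists (Rabs (h 0)), 0. split; [exact inI_0|reflexivity].
  - intros y [z [Hz ->]]. auto.
Qed.

Lemma supnorm_nonneg h : bounded_on_I h -> 0 <= supnorm h.
Proof.
  intros Hb. eapply Rle_trans; [apply Rabs_pos|exact (supnorm_ge h 0 Hb inI_0)].
Qed.

Lemma supnorm_le_sum h u v : bounded_on_I u -> bounded_on_I v ->
  (forall x, inI x -> Rabs (h x) <= Rabs (u x) + Rabs (v x)) ->
  supnorm h <= supnorm u + supnorm v.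
Proof.
  intros Hu Hv Hh. apply supnorm_le. intros x Hx.
  pose proof (supnorm_ge u x Hu Hx). pose proof (supnorm_ge v x Hv Hx).
  specialize (Hh x Hx). lra.
Qed.

Lemma supnorm_eq0 h : bounded_on_I h -> supnorm h = 0 -> forall x, inI x -> h x = 0.
Proof.
  intros Hb H0 x Hx. pose proof (supnorm_ge h x Hb Hx).
  pose proof (Rabs_pos (h x)). apply Rabs_eq_0. lra.
Qed.

Lemma sin_INR_PI k : sin (INR k * PI) = 0.
Proof.
  induction k as [|k IH].
  - simpl. rewrite Rmult_0_l. apply sin_0.
  - rewrite S_INR. replace ((INR k + 1) * PI) with (INR k * PI + PI) by ring.
    rewrite neg_sin, IH. ring.
Qed.

Lemma trig_sum_continuous a b m x : continuity_pt (trig_sum a b m) x.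
Proof. induction m as [|m IH]; simpl; [apply continuity_pt_const; now intros|reg]. Qed.

Lemma trig_sum_periodic a b m : trig_sum a b m (-PI) = trig_sum a b m PI.
Proof.
  induction m as [|m IH]; simpl; [reflexivity|]. rewrite IH.
  change (match m with 0%nat => 1 | S _ => INR m + 1 end) with (INR (S m)).
  rewrite Ropp_mult_distr_r_reverse, cos_neg, sin_neg, sin_INR_PI. ring.
Qed.

Lemma rat_trig_C2pi m n r : rat_trig m n r -> C2pi r.
Proof.
  intros [p [q [[ap [bp Hp]] [[aq [bq Hq]] [Hpos ->]]]]]. split.
  - apply cont_on_of_pt. intros x Hx.
    apply continuity_pt_div.
    + apply continuity_pt_ext with (trig_sum ap bp m); [now intros|].
      apply trig_sum_continuous.
    + apply continuity_pt_ext with (trig_sum aq bq n); [now intros|].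
      apply trig_sum_continuous.
    + specialize (Hpos x Hx). lra.
  - rewrite !Hp, !Hq, !trig_sum_periodic. reflexivity.
Qed.

Lemma rat_trig_zero m n : rat_trig m n (fun _ => 0 / 1).
Proof.
  exists (fun _ => 0), (fun _ => 1). split; [|split; [|split]].
  - exists (fun _ => 0), (fun _ => 0). intros x.
    induction m as [|m IH]; simpl; [reflexivity|]. rewrite <- IH. ring.
  - exists (fun k => match k with O => 1 | _ => 0 end), (fun _ => 0). intros x.
    induction n as [|n IH]; simpl; [reflexivity|]. rewrite <- IH. ring.
  - intros; lra.
  - reflexivity.
Qed.

Lemma Linv_continuous xs i x : continuity_pt (Linv xs i) x.
Proof. unfold Linv. reg. Qed.

Section Partition.
Variables (xs : nat -> R) (N : nat).
Hypothesis HP : partition xs N.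

Lemma partition_mono i j : (i <= j <= N)%nat -> xs i <= xs j.
Proof.
  destruct HP as [_ [_ [_ Hs]]]. intros [Hij HjN].
  induction j as [|j IH].
  - replace i with 0%nat by lia. lra.
  - destruct (Nat.eq_dec i (S j)) as [->|Hne]; [lra|].
    assert (xs i <= xs j) by (apply IH; lia). specialize (Hs j ltac:(lia)). lra.
Qed.

Lemma piece_lt i : (1 <= i <= N)%nat -> xs (i - 1)%nat < xs i.
Proof.
  destruct HP as [_ [_ [_ Hs]]]. intros Hi. specialize (Hs (i - 1)%nat ltac:(lia)).
  now replace (S (i - 1)) with i in Hs by lia.
Qed.

Lemma piece_in_I i t : (1 <= i <= N)%nat -> xs (i - 1)%nat <= t <= xs i -> inI t.
Proof.
  intros Hi Ht. destruct HP as [_ [Hx0 [HxN _]]].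
  pose proof (partition_mono 0 (i - 1) ltac:(lia)).
  pose proof (partition_mono i N ltac:(lia)). unfold inI. lra.
Qed.

Lemma piece_exists t : inI t -> exists i, (1 <= i <= N)%nat /\ xs (i - 1)%nat <= t <= xs i.
Proof.
  destruct HP as [H2 [Hx0 [HxN _]]]. intros Ht. unfold inI in Ht.
  assert (Hj : forall j, (1 <= j <= N)%nat -> t <= xs j ->
            exists i, (1 <= i <= N)%nat /\ xs (i - 1)%nat <= t <= xs i).
  { induction j as [|j IH]; intros Hj Htj; [lia|].
    destruct (Rle_dec (xs j) t) as [Hle|Hgt].
    - exists (S j). split; [exact Hj|]. replace (S j - 1)%nat with j by lia. lra.
    - destruct j as [|j]; [rewrite Hx0 in Hgt; lra|]. apply IH; [lia|lra]. }
  apply (Hj N); [lia|lra].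
Qed.

Lemma Linv_eq i t : (1 <= i <= N)%nat ->
  Linv xs i t = (t - xs (i - 1)%nat) * (2 * PI / (xs i - xs (i - 1)%nat)) - PI.
Proof.
  intros Hi. pose proof (piece_lt i Hi). pose proof PI_RGT_0.
  unfold Linv, Lb, La. field. split; lra.
Qed.

Lemma Linv_left i : (1 <= i <= N)%nat -> Linv xs i (xs (i - 1)%nat) = - PI.
Proof. intros Hi. rewrite Linv_eq by exact Hi. ring. Qed.

Lemma Linv_right i : (1 <= i <= N)%nat -> Linv xs i (xs i) = PI.
Proof.
  intros Hi. rewrite Linv_eq by exact Hi. pose proof (piece_lt i Hi). field. lra.
Qed.

Lemma Linv_in_I i t : (1 <= i <= N)%nat -> xs (i - 1)%nat <= t <= xs i -> inI (Linv xs i t).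
Proof.
  intros Hi Ht. rewrite Linv_eq by exact Hi.
  pose proof (piece_lt i Hi). pose proof PI_RGT_0.
  set (D := xs i - xs (i - 1)%nat) in *.
  assert (Hslope : 0 < 2 * PI / D) by (apply Rdiv_lt_0_compat; unfold D; lra).
  assert (0 <= (t - xs (i - 1)%nat) * (2 * PI / D)) by (apply Rmult_le_pos; lra).
  assert ((t - xs (i - 1)%nat) * (2 * PI / D) <= D * (2 * PI / D))
    by (apply Rmult_le_compat_r; unfold D in *; lra).
  replace (D * (2 * PI / D)) with (2 * PI) in H2 by (field; unfold D; lra).
  unfold inI. lra.
Qed.

End Partition.

Lemma alpha_max_ge alpha N i : (1 <= i <= N)%nat -> Rabs (alpha i) <= alpha_max alpha N.
Proof.
  induction N as [|N IH]; intros Hi; [lia|]. simpl.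
  destruct (Nat.eq_dec i (S N)) as [->|Hne]; [apply Rmax_r|].
  eapply Rle_trans; [apply IH; lia|apply Rmax_l].
Qed.

Lemma alpha_max_nonneg alpha N : 0 <= alpha_max alpha N.
Proof.
  induction N as [|N IH]; simpl; [lra|]. eapply Rle_trans; [exact IH|apply Rmax_l].
Qed.

Lemma alpha_max_lt1 alpha N :
  (forall i, (1 <= i <= N)%nat -> -1 < alpha i < 1) -> alpha_max alpha N < 1.
Proof.
  induction N as [|N IH]; intros H; simpl; [lra|]. apply Rmax_lub_lt.
  - apply IH. intros; apply H; lia.
  - specialize (H (S N) ltac:(lia)). apply Rabs_def1; lra.
Qed.

(* The operator h |-> (t |-> alpha_i h(L_i^{-1} t) for t in I_i) underlying the
   fractal functional equation; frac_op xs alpha k h is its definition on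
   [x_0, x_k], piece by piece from the left. *)
Fixpoint frac_op (xs alpha : nat -> R) (k : nat) (h : R -> R) (t : R) : R :=
  match k with
  | O => 0
  | S j => if Rle_dec t (xs j) then frac_op xs alpha j h t
           else alpha (S j) * h (Linv xs (S j) t)
  end.

Section FractalOperator.
Variables (xs : nat -> R) (N : nat) (alpha : nat -> R).
Hypothesis HP : partition xs N.

Lemma frac_op_stable h i d t :
  (i + d <= N)%nat -> t <= xs i -> frac_op xs alpha (i + d) h t = frac_op xs alpha i h t.
Proof.
  induction d as [|d IH]; intros Hd Ht; [now rewrite Nat.add_0_r|].
  replace (i + S d)%nat with (S (i + d)) by lia. simpl.
  destruct (Rle_dec t (xs (i + d)%nat)) as [Hle|Hgt]; [apply IH; [lia|exact Ht]|].
  exfalso. apply Hgt. eapply Rle_trans; [exact Ht|apply (partition_mono xs N HP); lia].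
Qed.

Section Vanishing.
Variable h : R -> R.
Hypotheses (Hh0 : h (- PI) = 0) (Hh1 : h PI = 0).

(* When h vanishes at both ends, the two definitions at a common endpoint of
   neighbouring pieces agree (both are 0), so on I_i the operator is exactly
   alpha_i h o L_i^{-1}. *)
Lemma frac_op_upto i : (1 <= i <= N)%nat ->
  forall t, xs (i - 1)%nat <= t <= xs i -> frac_op xs alpha i h t = alpha i * h (Linv xs i t).
Proof.
  induction i as [|i IH]; intros Hi t Ht; [lia|].
  simpl. replace (S i - 1)%nat with i in Ht by lia.
  destruct (Rle_dec t (xs i)) as [Hle|Hgt]; [|reflexivity].
  assert (t = xs i) as -> by lra.
  replace (xs i) with (xs (S i - 1)%nat) at 2 by (f_equal; lia).
  rewrite (Linv_left xs N HP) by lia. rewrite Hh0, Rmult_0_r.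
  destruct i as [|i]; [reflexivity|].
  rewrite IH; [|lia|replace (S i - 1)%nat with i by lia;
                   split; [apply (partition_mono xs N HP); lia|lra]].
  rewrite (Linv_right xs N HP) by lia. rewrite Hh1. ring.
Qed.

Lemma frac_op_piece i : (1 <= i <= N)%nat ->
  forall t, xs (i - 1)%nat <= t <= xs i -> frac_op xs alpha N h t = alpha i * h (Linv xs i t).
Proof.
  intros Hi t Ht. replace N with (i + (N - i))%nat by lia.
  rewrite frac_op_stable by (lia || lra). now apply frac_op_upto.
Qed.

Lemma frac_op_ends : frac_op xs alpha N h (- PI) = 0 /\ frac_op xs alpha N h PI = 0.
Proof.
  destruct HP as [H2 [Hx0 [HxN _]]].
  assert (H1N : (1 <= 1 <= N)%nat) by lia. assert (HNN : (1 <= N <= N)%nat) by lia.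
  pose proof (partition_mono xs N HP 0 1 ltac:(lia)).
  pose proof (partition_mono xs N HP (N - 1) N ltac:(lia)). split.
  - rewrite (frac_op_piece 1 H1N) by (simpl; lra).
    rewrite <- Hx0. change (xs 0%nat) with (xs (1 - 1)%nat).
    rewrite (Linv_left xs N HP 1 H1N), Hh0. ring.
  - rewrite (frac_op_piece N HNN) by lra.
    rewrite <- HxN, (Linv_right xs N HP N HNN), Hh1. ring.
Qed.

Lemma frac_op_bound B : (forall s, inI s -> Rabs (h s) <= B) ->
  forall t, inI t -> Rabs (frac_op xs alpha N h t) <= alpha_max alpha N * B.
Proof.
  intros HB t Ht. destruct (piece_exists xs N HP t Ht) as [i [Hi Hti]].
  rewrite (frac_op_piece i Hi t Hti), Rabs_mult.
  apply Rmult_le_compat; try apply Rabs_pos.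
  - now apply alpha_max_ge.
  - apply HB. now apply (Linv_in_I xs N HP).
Qed.

Lemma frac_op_cont : cont_on (- PI) PI h -> cont_on (- PI) PI (frac_op xs alpha N h).
Proof.
  intros Hc. destruct HP as [H2 [Hx0 [HxN _]]].
  assert (Hpiece : forall i, (1 <= i <= N)%nat ->
            cont_on (xs (i - 1)%nat) (xs i) (frac_op xs alpha N h)).
  { intros i Hi.
    apply cont_on_ext with (g := fun t => alpha i * h (Linv xs i t)).
    - apply cont_on_scal; [now apply Rlt_le, (piece_lt xs N HP)|].
      apply cont_on_comp with (-PI) PI; auto using PI_ge_mPI, Linv_continuous.
      intros; now apply (Linv_in_I xs N HP).
    - intros t Ht. symmetry. now apply frac_op_piece. }
  assert (Hupto : forall j, (1 <= j <= N)%nat -> cont_on (- PI) (xs j) (frac_op xs alpha N h)).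
  { induction j as [|j IH]; intros Hj; [lia|]. destruct j as [|j].
    - rewrite <- Hx0. exact (Hpiece 1%nat ltac:(lia)).
    - apply cont_on_glue with (c := xs (S j)); [apply IH; lia|].
      replace (S j) with (S (S j) - 1)%nat at 1 by lia. apply Hpiece; lia. }
  rewrite <- HxN at 2. apply Hupto. lia.
Qed.

End Vanishing.

Lemma frac_op_iterates w B :
  w (- PI) = 0 -> w PI = 0 -> cont_on (- PI) PI w ->
  (forall s, inI s -> Rabs (w s) <= B) -> forall k,
  let v := Nat.iter (S k) (frac_op xs alpha N) w in
  (v (- PI) = 0 /\ v PI = 0) /\ cont_on (- PI) PI v /\
  forall t, inI t -> Rabs (v t) <= alpha_max alpha N * B * alpha_max alpha N ^ k.
Proof.
  intros Hw0 Hw1 Hw HB k. induction k as [|k [[Hv0 Hv1] [Hvc Hvb]]]; simpl.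
  - split; [|split]; [now apply frac_op_ends|now apply frac_op_cont|].
    intros t Ht. rewrite Rmult_1_r. now apply frac_op_bound.
  - split; [|split]; [now apply frac_op_ends|now apply frac_op_cont|].
    intros t Ht. rewrite <- Rmult_assoc, (Rmult_comm _ (alpha_max alpha N)), Rmult_assoc.
    now apply frac_op_bound.
Qed.

End FractalOperator.

Lemma series_geom_dominated (c : nat -> R) C q : 0 <= q < 1 ->
  (forall k, Rabs (c k) <= C * q ^ k) -> ex_series c /\ Rabs (Series c) <= C / (1 - q).
Proof.
  intros Hq Hc.
  assert (Hgeom : is_series (fun k => C * q ^ k) (C / (1 - q))).
  { assert (H := is_series_geom q ltac:(rewrite Rabs_right; lra)).
    apply (is_series_scal_l C) in H. exact H. }
  assert (Habs : ex_series (fun k => Rabs (c k))).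
  { apply (@ex_series_le R_AbsRing R_CompleteNormedModule _ (fun k => C * q ^ k)).
    - intros k. change (Rabs (Rabs (c k)) <= C * q ^ k). now rewrite Rabs_Rabsolu.
    - eexists; exact Hgeom. }
  split; [now apply ex_series_Rabs|].
  eapply Rle_trans; [now apply Series_Rabs|].
  rewrite <- (is_series_unique _ _ Hgeom).
  apply Series_le; [intros k; split; [apply Rabs_pos|apply Hc]|eexists; exact Hgeom].
Qed.

Lemma cont_on_series a b (v : nat -> R -> R) C q : a <= b -> 0 <= q < 1 ->
  (forall k, cont_on a b (v k)) ->
  (forall k t, a <= t <= b -> Rabs (v k t) <= C * q ^ k) ->
  cont_on a b (fun t => Series (fun k => v k t)).
Proof.
  intros Hab Hq Hcont Hdom.
  assert (HC : 0 <= C).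
  { pose proof (Hdom 0%nat a ltac:(lra)). pose proof (Rabs_pos (v 0%nat a)).
    simpl in *. lra. }
  assert (Htail : forall n t, a <= t <= b ->
    Rabs (Series (fun k => v k t) - sum_f_R0 (fun k => v k t) n) <= C * q ^ S n / (1 - q)).
  { intros n t Ht.
    rewrite (Series_incr_n _ (S n)) by (lia || (apply (series_geom_dominated _ C q); auto)).
    simpl pred. unfold Rminus. rewrite Rplus_comm, <- Rplus_assoc, Rplus_opp_l, Rplus_0_l.
    apply series_geom_dominated; [exact Hq|]. intros k.
    rewrite Rmult_assoc, <- pow_add. now apply Hdom. }
  apply cont_on_unif_limit with (P := fun n t => sum_f_R0 (fun k => v k t) n).
  - intros n. induction n as [|n IH]; simpl; [apply Hcont|now apply cont_on_plus].
  - intros eps Heps.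
    destruct (pow_lt_1_zero q ltac:(rewrite Rabs_right; lra)
                (eps * (1 - q) / (C + 1))) as [n Hn].
    { apply Rdiv_lt_0_compat; nra. }
    exists n. intros t Ht. eapply Rle_lt_trans; [now apply Htail|].
    specialize (Hn n (le_n n)). rewrite Rabs_right in Hn by (apply Rle_ge, pow_le; lra).
    assert (Hqn : 0 <= q ^ n) by (apply pow_le; lra).
    assert (Hsmall : (C + 1) * q ^ n < eps * (1 - q)).
    { apply Rmult_lt_compat_l with (r := C + 1) in Hn; [|lra].
      replace ((C + 1) * (eps * (1 - q) / (C + 1))) with (eps * (1 - q)) in Hn
        by (field; lra). exact Hn. }
    apply Rmult_lt_reg_r with (1 - q); [lra|].
    replace (C * q ^ S n / (1 - q) * (1 - q)) with (C * q * q ^ n) by (simpl; field; lra).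
    assert (0 <= C * q ^ n * (1 - q)) by (apply Rmult_le_pos; [apply Rmult_le_pos|]; lra).
    nra.
Qed.

(* Existence of the alpha-fractal function f^alpha_{Delta,b}: its deviation
   g - f solves u = A (f - b + u) for the contraction A = frac_op, and is given
   by the Neumann series u = sum_k A^(k+1) (f - b). *)
Lemma fractal_exists xs N alpha f b : partition xs N ->
  (forall i, (1 <= i <= N)%nat -> -1 < alpha i < 1) ->
  cont_on (- PI) PI f -> cont_on (- PI) PI b -> f (- PI) = b (- PI) -> f PI = b PI ->
  exists g, is_fractal xs N alpha f b g.
Proof.
  intros HP Hal Hf Hb Hb0 Hb1.
  set (w := fun t => f t - b t).
  set (a := alpha_max alpha N).
  assert (Ha : 0 <= a < 1) by (split; [apply alpha_max_nonneg|now apply alpha_max_lt1]).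
  assert (Hw : cont_on (- PI) PI w) by (apply cont_on_minus; auto using PI_ge_mPI).
  assert (Hw0 : w (- PI) = 0) by (unfold w; lra).
  assert (Hw1 : w PI = 0) by (unfold w; lra).
  destruct (cont_bounded_on_I w Hw) as [B HB].
  set (v := fun k => Nat.iter (S k) (frac_op xs alpha N) w).
  pose proof (frac_op_iterates xs N alpha HP w B Hw0 Hw1 Hw HB) as Hv.
  assert (Hv_ends : forall k, v k (- PI) = 0 /\ v k PI = 0) by apply Hv.
  assert (Hv_cont : forall k, cont_on (- PI) PI (v k)) by apply Hv.
  assert (Hv_bound : forall k t, inI t -> Rabs (v k t) <= (a * B) * a ^ k) by apply Hv.
  set (u := fun t => Series (fun k => v k t)).
  assert (Hu_cont : cont_on (- PI) PI u)
    by (apply cont_on_series with (a * B) a; auto using PI_ge_mPI).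
  exists (fun t => f t + u t). split; [apply cont_on_plus; auto using PI_ge_mPI|].
  intros i Hi t Ht.
  assert (Hs : inI (Linv xs i t)) by now apply (Linv_in_I xs N HP).
  assert (Hu_eq : u t = alpha i * (w (Linv xs i t) + u (Linv xs i t))).
  { unfold u. rewrite Series_incr_1
      by (apply (series_geom_dominated _ (a * B) a); auto;
          intros; apply Hv_bound, (piece_in_I xs N HP i); auto).
    unfold v at 1. simpl Nat.iter.
    rewrite (frac_op_piece xs N alpha HP w Hw0 Hw1 i Hi t Ht).
    rewrite (Series_ext _ (fun k => alpha i * v k (Linv xs i t))).
    - rewrite Series_scal_l. ring.
    - intros k. apply (frac_op_piece xs N alpha HP); auto; apply Hv_ends. }
  rewrite Hu_eq. unfold w. ring.
Qed.

Section AdmissibleOperator.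
Variable L : (R -> R) -> (R -> R).
Hypothesis HL : admissible_L L.

Lemma L_zero x : inI x -> L (fun _ => 0) x = 0.
Proof.
  intros Hx. destruct HL as [_ [Lext [Llin _]]].
  assert (H0 : C2pi (fun _ : R => 0)) by (split; [apply cont_on_const|reflexivity]).
  pose proof (Llin (fun _ => 0) (fun _ => 0) 1 H0 H0 x Hx) as H.
  rewrite (Lext (fun _ => 0 + 1 * 0) (fun _ => 0)) in H by (intros; ring || exact Hx).
  lra.
Qed.

Lemma L_scal h c x : C2pi h -> inI x -> L (fun t => c * h t) x = c * L h x.
Proof.
  intros Hh Hx. destruct HL as [_ [Lext [Llin _]]].
  assert (H0 : C2pi (fun _ : R => 0)) by (split; [apply cont_on_const|reflexivity]).
  pose proof (Llin (fun _ => 0) h c H0 Hh x Hx) as H.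
  rewrite (Lext (fun t => 0 + c * h t) (fun t => c * h t)) in H by (intros; ring || exact Hx).
  rewrite H, L_zero by exact Hx. ring.
Qed.

(* The values ||h - L h|| for ||h|| <= 1 are bounded by 1 + ||L||, so the
   operator norm ||Id - L|| is a genuine supremum. *)
Lemma IdL_values_bounded : exists K0, forall y,
  (exists h, C2pi h /\ supnorm h <= 1 /\ y = supnorm (fun t => h t - L h t)) -> y <= K0.
Proof.
  destruct HL as [Lc [_ [_ [[M HM] _]]]]. exists (1 + Rabs M).
  intros y [h [Hh [Hh1 ->]]].
  assert (bh : bounded_on_I h) by apply cont_bounded_on_I, Hh.
  assert (bLh : bounded_on_I (L h)) by apply cont_bounded_on_I, Lc, Hh.
  pose proof (HM h Hh). pose proof (supnorm_nonneg h bh).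
  pose proof (Rle_abs M). pose proof (Rabs_pos M).
  assert (M * supnorm h <= Rabs M) by nra.
  eapply Rle_trans; [apply supnorm_le_sum with (u := h) (v := L h); auto|lra].
  intros x _. unfold Rminus. rewrite <- (Rabs_Ropp (L h x)). apply Rabs_triang.
Qed.

Lemma opnorm_IdL_ge h : C2pi h -> supnorm h <= 1 ->
  supnorm (fun t => h t - L h t) <= opnorm_IdL L.
Proof.
  intros Hh Hh1. destruct IdL_values_bounded as [K0 HK0].
  apply Rsup_ge with K0; [exact HK0|]. eauto.
Qed.

Lemma opnorm_IdL_nonneg : 0 <= opnorm_IdL L.
Proof.
  destruct HL as [Lc _].
  assert (H0 : C2pi (fun _ : R => 0)) by (split; [apply cont_on_const|reflexivity]).
  eapply Rle_trans; [|apply (opnorm_IdL_ge _ H0)].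
  - apply supnorm_nonneg, cont_bounded_on_I, cont_on_minus;
      [apply PI_ge_mPI|apply cont_on_const|apply Lc, H0].
  - apply supnorm_le. intros; rewrite Rabs_R0; lra.
Qed.

(* The defining inequality of the operator norm: ||r - L r|| <= ||Id - L|| ||r||,
   obtained by normalising r (the case ||r|| = 0 uses L 0 = 0). *)
Lemma opnorm_IdL_bound r : C2pi r ->
  supnorm (fun t => r t - L r t) <= opnorm_IdL L * supnorm r.
Proof.
  intros Hr. destruct HL as [Lc [Lext _]].
  assert (br : bounded_on_I r) by apply cont_bounded_on_I, Hr.
  set (s := supnorm r). pose proof (supnorm_nonneg r br) as Hs0. fold s in Hs0.
  destruct (Req_dec s 0) as [Hs|Hs].
  - rewrite Hs, Rmult_0_r. apply supnorm_le. intros x Hx.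
    rewrite (Lext r (fun _ => 0)) by (exact (supnorm_eq0 r br Hs) || exact Hx).
    rewrite (supnorm_eq0 r br Hs x Hx), L_zero by exact Hx.
    rewrite Rminus_0_r, Rabs_R0. lra.
  - set (h := fun t => / s * r t).
    assert (Hinv : 0 < / s) by (apply Rinv_0_lt_compat; lra).
    assert (Hh : C2pi h).
    { split; [apply cont_on_scal; [apply PI_ge_mPI|apply Hr]|].
      unfold h. now rewrite (proj2 Hr). }
    assert (Hh1 : supnorm h <= 1).
    { apply supnorm_le. intros x Hx. unfold h.
      rewrite Rabs_mult, (Rabs_right (/ s)) by lra.
      pose proof (supnorm_ge r x br Hx). fold s in H.
      replace 1 with (/ s * s) by (field; lra). now apply Rmult_le_compat_l; [lra|]. }
    pose proof (opnorm_IdL_ge h Hh Hh1) as HK.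
    apply supnorm_le. intros x Hx.
    assert (bd : bounded_on_I (fun t => h t - L h t))
      by (apply cont_bounded_on_I, cont_on_minus; [apply PI_ge_mPI|apply Hh|apply Lc, Hh]).
    pose proof (supnorm_ge _ x bd Hx) as Hx2. simpl in Hx2.
    replace (h x - L h x) with (/ s * (r x - L r x)) in Hx2
      by (unfold h; rewrite (L_scal r (/ s) x Hr Hx); ring).
    rewrite Rabs_mult, (Rabs_right (/ s)) in Hx2 by lra.
    replace (Rabs (r x - L r x)) with (s * (/ s * Rabs (r x - L r x))) by (field; lra).
    rewrite (Rmult_comm (opnorm_IdL L)). apply Rmult_le_compat_l; lra.
Qed.

End AdmissibleOperator.

(* The basic fractal estimate: on each piece g - f = alpha_i ((g - f) + (f - b))
   o L_i^{-1}, hence ||g - f|| <= |alpha|_inf (||g - f|| + ||f - b||). *)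
Lemma fractal_deviation xs N alpha f b g : partition xs N ->
  cont_on (- PI) PI f -> cont_on (- PI) PI b -> is_fractal xs N alpha f b g ->
  (1 - alpha_max alpha N) * supnorm (fun t => g t - f t)
    <= alpha_max alpha N * supnorm (fun t => f t - b t).
Proof.
  intros HP Hf Hb [Hg Heq].
  assert (bgf : bounded_on_I (fun t => g t - f t))
    by (apply cont_bounded_on_I, cont_on_minus; auto using PI_ge_mPI).
  assert (bfb : bounded_on_I (fun t => f t - b t))
    by (apply cont_bounded_on_I, cont_on_minus; auto using PI_ge_mPI).
  assert (Hdev : supnorm (fun t => g t - f t) <= alpha_max alpha N *
            (supnorm (fun t => g t - f t) + supnorm (fun t => f t - b t))).
  { apply supnorm_le. intros x Hx.
    destruct (piece_exists xs N HP x Hx) as [i [Hi Hxi]].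
    set (s := Linv xs i x).
    assert (Hs : inI s) by now apply (Linv_in_I xs N HP).
    rewrite (Heq i Hi x Hxi). fold s.
    replace (f x + alpha i * (g s - b s) - f x) with
      (alpha i * ((g s - f s) + (f s - b s))) by ring.
    rewrite Rabs_mult. apply Rmult_le_compat; try apply Rabs_pos.
    - now apply alpha_max_ge.
    - eapply Rle_trans; [apply Rabs_triang|].
      apply Rplus_le_compat.
      + exact (supnorm_ge (fun t => g t - f t) s bgf Hs).
      + exact (supnorm_ge (fun t => f t - b t) s bfb Hs). }
  lra.
Qed.

(* Combines ||f - r^alpha|| <= ||f - r|| + ||r^alpha - r||, the
   fractal estimate for ||r^alpha - r||, ||r - L r|| <= ||Id - L|| ||r|| and
   ||r|| <= ||f|| + ||f - r||. *)
Lemma fractal_approximation_error xs N alpha L f r g : partition xs N ->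
  (forall i, (1 <= i <= N)%nat -> -1 < alpha i < 1) ->
  admissible_L L -> C2pi f -> C2pi r -> is_fractal xs N alpha r (L r) g ->
  supnorm (fun t => f t - g t) <=
    (1 + alpha_max alpha N * (opnorm_IdL L - 1)) / (1 - alpha_max alpha N)
      * supnorm (fun t => f t - r t)
    + alpha_max alpha N / (1 - alpha_max alpha N) * opnorm_IdL L * supnorm f.
Proof.
  intros HP Hal HL Hf Hr Hg.
  pose proof (proj1 HL r Hr) as HLr.
  set (a := alpha_max alpha N). set (K := opnorm_IdL L).
  assert (Ha : 0 <= a < 1) by (split; [apply alpha_max_nonneg|now apply alpha_max_lt1]).
  assert (HK : 0 <= K) by now apply opnorm_IdL_nonneg.
  assert (Hbnd : forall u v, cont_on (-PI) PI u -> cont_on (-PI) PI v ->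
            bounded_on_I (fun t => u t - v t))
    by (intros; apply cont_bounded_on_I, cont_on_minus; auto using PI_ge_mPI).
  set (F := supnorm f). set (D := supnorm (fun t => f t - r t)).
  set (G := supnorm (fun t => g t - r t)).
  assert (Hnorm_r : supnorm r <= F + D).
  { apply supnorm_le_sum; [apply cont_bounded_on_I, Hf|apply Hbnd; [apply Hf|apply Hr]|].
    intros x _. pose proof (Rabs_triang (f x) (- (f x - r x))) as Htri.
    rewrite Rabs_Ropp in Htri. now replace (f x + - (f x - r x)) with (r x) in Htri by ring. }
  assert (Hdev : (1 - a) * G <= a * (K * (F + D))).
  { eapply Rle_trans; [apply (fractal_deviation xs N alpha r (L r) g HP); auto;
                       [apply Hr|apply HLr]|].
    apply Rmult_le_compat_l; [lra|].
    eapply Rle_trans; [now apply opnorm_IdL_bound|].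
    apply Rmult_le_compat_l; assumption. }
  assert (Hfg : supnorm (fun t => f t - g t) <= D + G).
  { apply supnorm_le_sum; [apply Hbnd; [apply Hf|apply Hr]|apply Hbnd; [apply Hg|apply Hr]|].
    intros x _. pose proof (Rabs_triang (f x - r x) (- (g x - r x))) as Htri.
    rewrite Rabs_Ropp in Htri.
    now replace (f x - r x + - (g x - r x)) with (f x - g x) in Htri by ring. }
  replace ((1 + a * (K - 1)) / (1 - a) * D + a / (1 - a) * K * F)
    with (D + a * (K * (F + D)) * / (1 - a)) by (field; lra).
  apply Rmult_le_compat_r with (r := / (1 - a)) in Hdev;
    [|left; apply Rinv_0_lt_compat; lra].
  replace ((1 - a) * G * / (1 - a)) with G in Hdev by (field; lra).
  lra.
Qed.

Theorem mainTheorem6 (xs : nat -> R) (N : nat) (alpha : nat -> R)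
  (L : (R -> R) -> (R -> R)) (f : R -> R) (m n : nat) :
  partition xs N ->
  (forall i, (1 <= i <= N)%nat -> -1 < alpha i < 1) ->
  admissible_L L ->
  C2pi f ->
  E_alpha_mn xs N alpha L m n f <=
    (1 + alpha_max alpha N * (opnorm_IdL L - 1)) / (1 - alpha_max alpha N)
      * E_mn m n f
    + alpha_max alpha N / (1 - alpha_max alpha N) * opnorm_IdL L * supnorm f.
Proof.
  intros HP Hal HL Hf.
  assert (Ha : 0 <= alpha_max alpha N < 1)
    by (split; [apply alpha_max_nonneg|now apply alpha_max_lt1]).
  pose proof (opnorm_IdL_nonneg L HL).
  apply Rinf_affine_le with (m := 0).
  -
    apply Rdiv_lt_0_compat; nra.
  - exists (supnorm (fun t => f t - 0 / 1)), (fun _ => 0 / 1). split; [apply rat_trig_zero|reflexivity].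
  - intros y [r [g [_ [[Hg _] ->]]]].
    apply supnorm_nonneg, cont_bounded_on_I, cont_on_minus; [apply PI_ge_mPI|apply Hf|exact Hg].
  - intros y [r [Hr ->]].
    pose proof (rat_trig_C2pi m n r Hr) as Hr2.
    pose proof HL as [Lc [_ [_ [_ Lend]]]].
    destruct (Lend r Hr2) as [Hend0 Hend1].
    destruct (fractal_exists xs N alpha r (L r) HP Hal (proj1 Hr2) (proj1 (Lc r Hr2))
                (eq_sym Hend0) (eq_sym Hend1)) as [g Hg].
    exists (supnorm (fun t => f t - g t)). split; [exists r, g; auto|].
    exact (fractal_approximation_error xs N alpha L f r g HP Hal HL Hf Hr2 Hg).
Qed.
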